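(* Let $f:(0,\infty)\to(0,\infty)$ be a $C^\infty(0,\infty)$-function such that $f'$ is a Bernstein function and $f^{(n)}(x)\neq0$ for all $x>0$ and $n\in\mathbb{N}$. Then its inverse $f^{-1}$ is a Bernstein function with $(f^{-1})^{(n)}(x)\neq0$ for all $x>0$ and $n\in\mathbb{N}$.
   Context: A Bernstein function is a non-negative function $g$ of class $C^\infty(0,\infty)$ with $(-1)^{n-1}g^{(n)}(x)\ge0$ for all $n\in\mathbb{N}$ and $x>0$. (Under the hypotheses $f'>0$, so $f$ is strictly increasing and invertible onto its image.) *)

From mathcomp Require Import all_boot all_order all_algebra.
From mathcomp Require Import all_classical all_reals all_analysis.
Set Implicit Arguments. Unset Strict Implicit. Unset Printing Implicit Defensive.
Import Order.TTheory GRing.Theory Num.Theory.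
Local Open Scope classical_set_scope.
Local Open Scope ring_scope.

Definition smooth_on {R : realType} (A : set R) (g : R -> R) : Prop :=
  forall (n : nat) (x : R), A x -> derivable (derive1n n g) x 1.

Definition bernstein_on {R : realType} (A : set R) (g : R -> R) : Prop :=
  [/\ smooth_on A g,
      (forall x, A x -> 0 <= g x) &
      (forall (n : nat) x, (0 < n)%N -> A x ->
          0 <= (-1) ^+ n.-1 * derive1n n g x)].

Definition bernstein {R : realType} (g : R -> R) : Prop :=
  bernstein_on `]0, +oo[%classic g.

(* Put h := 1/f'.  From g (f x) = x we get g' = h o g on f((0,oo)).  The hypotheses
   say exactly that f' > 0 and that f'' is strictly completely monotone, i.e.
   (-1)^k f^(k+2) > 0 for all k.  Composing a strictly completely monotone phi with a
   psi whose derivative is strictly completely monotone gives a strictly completely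
   monotone function, by the chain rule (phi o psi)' = (phi' o psi) psi', the Leibniz
   rule and induction on the order.  With phi = 1/s and psi = f' this makes h strictly
   completely monotone.  With phi = h and psi = g, the derivatives of h o g up to
   order n only involve those of g' below order n, so induction on n shows that
   g' = h o g is strictly completely monotone: g is a Bernstein function with
   nonvanishing derivatives. *)

From mathcomp Require Import all_boot all_order all_algebra.
From mathcomp Require Import all_classical all_reals all_analysis.
From mathcomp Require Import ring.
Import Order.TTheory GRing.Theory Num.Theory.
Import numFieldNormedType.Exports.
Local Open Scope classical_set_scope.
Local Open Scope ring_scope.

Set Implicit Arguments.
Unset Strict Implicit.
Unset Printing Implicit Defensive.

Lemma derivable_comp {R : realType} (phi psi : R -> R) x :
  derivable psi x 1 -> derivable phi (psi x) 1 -> derivable (phi \o psi) x 1.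
Proof. by move=> /derivableP dpsi /derivableP dphi; case: (is_derive1_comp dphi dpsi). Qed.

Lemma smooth_on_derive1 {R : realType} (U : set R) u :
  smooth_on U u -> smooth_on U (derive1 u).
Proof. by move=> su n x Ux; rewrite -derive1Sn; exact: su. Qed.

Section local_derivatives.
Context {R : realType}.
Variable U : set R.
Hypothesis oU : open U.
Implicit Types (u v : R -> R) (c : R).

Lemma near_eq_on u v x : (forall y, U y -> u y = v y) -> U x -> {near x, u =1 v}.
Proof. by move=> uv Ux; apply: filterS uv _; exact: open_nbhs_nbhs. Qed.

Lemma derivable_eq_on u v x : (forall y, U y -> u y = v y) -> U x ->
  derivable u x 1 -> derivable v x 1.
Proof. by move=> uv Ux; apply/near_eq_derivable/near_eq_on. Qed.

Lemma derive1_eq_on u v x : (forall y, U y -> u y = v y) -> U x ->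
  derive1 u x = derive1 v x.
Proof. by move=> uv Ux; rewrite !derive1E; apply/near_eq_derive/near_eq_on. Qed.

Lemma derive1n_eq_on n u v x : (forall y, U y -> u y = v y) -> U x ->
  derive1n n u x = derive1n n v x.
Proof.
move=> uv; elim: n x => [|n IHn] x Ux; first exact: uv.
by rewrite !derive1nS; apply: derive1_eq_on.
Qed.

Lemma derive1M u v x : derivable u x 1 -> derivable v x 1 ->
  derive1 (u * v) x = derive1 u x * v x + u x * derive1 v x.
Proof.
by move=> du dv; rewrite !derive1E deriveM // addrC [v x *: _]mulrC.
Qed.

Definition derivable_upto n u :=
  forall k x, (k < n)%N -> U x -> derivable (derive1n k u) x 1.

Lemma derivable_uptoS n u : derivable_upto n.+1 u <->
  (forall x, U x -> derivable u x 1) /\ derivable_upto n (derive1 u).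
Proof.
split=> [du | [du du']].
  by split=> [x|k x kn]; [exact: (du 0%N) | rewrite -derive1Sn; exact: du].
by case=> [|k] x kn Ux; [exact: du | rewrite derive1Sn; exact: du'].
Qed.

Lemma derivable_uptoW n u : derivable_upto n.+1 u -> derivable_upto n u.
Proof. by move=> du k x kn; apply: du; apply: ltnW. Qed.

Lemma smooth_onP u : smooth_on U u <-> forall n, derivable_upto n u.
Proof. by split=> [su n k x _ | du n x]; [exact: su | exact: (du n.+1 n x)]. Qed.

Lemma derivable_upto_eq_on n u v : (forall x, U x -> u x = v x) ->
  derivable_upto n u -> derivable_upto n v.
Proof.
elim: n u v => [//|n IHn] u v uv /derivable_uptoS[du du'].
apply/derivable_uptoS; split=> [x Ux|]; first exact: derivable_eq_on uv Ux (du x Ux).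
by apply: IHn du' => x Ux; apply: derive1_eq_on.
Qed.

Lemma derivable_uptoD n u v :
  derivable_upto n u -> derivable_upto n v -> derivable_upto n (u + v).
Proof.
elim: n u v => [//|n IHn] u v /derivable_uptoS[du du'] /derivable_uptoS[dv dv'].
apply/derivable_uptoS; split=> [x Ux|]; first exact: derivableD (du x Ux) (dv x Ux).
apply: derivable_upto_eq_on (IHn _ _ du' dv') => x Ux.
by rewrite derive1E deriveD ?fctE ?derive1E; [|exact: du|exact: dv].
Qed.

Lemma derivable_uptoM n u v :
  derivable_upto n u -> derivable_upto n v -> derivable_upto n (u * v).
Proof.
elim: n u v => [//|n IHn] u v du dv.
move: (du) (dv) => /derivable_uptoS[du0 du'] /derivable_uptoS[dv0 dv'].
apply/derivable_uptoS; split=> [x Ux|]; first exact: derivableM (du0 x Ux) (dv0 x Ux).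
have := derivable_uptoD (IHn _ _ du' (derivable_uptoW dv))
                         (IHn _ _ (derivable_uptoW du) dv').
by apply: derivable_upto_eq_on => x Ux; rewrite derive1M ?fctE; [|exact: du0|exact: dv0].
Qed.

Lemma derivable_upto_comp (V : set R) n phi psi : (forall x, U x -> V (psi x)) ->
  smooth_on V phi -> derivable_upto n psi -> derivable_upto n (phi \o psi).
Proof.
move=> UV; elim: n phi => [//|n IHn] phi sphi dpsi.
move: (dpsi) => /derivable_uptoS[dpsi0 dpsi'].
apply/derivable_uptoS; split=> [x Ux|].
  by apply: derivable_comp; [exact: dpsi0 | exact: (sphi 0%N _ (UV x Ux))].
have := derivable_uptoM (IHn _ (smooth_on_derive1 sphi) (derivable_uptoW dpsi)) dpsi'.
apply: derivable_upto_eq_on => x Ux.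
by rewrite derive1_comp; [|exact: dpsi0 | exact: (sphi 0%N _ (UV x Ux))].
Qed.

Lemma smooth_onM u v : smooth_on U u -> smooth_on U v -> smooth_on U (u * v).
Proof. by move=> /smooth_onP su /smooth_onP sv; apply/smooth_onP => n; exact: derivable_uptoM. Qed.

Lemma smooth_on_comp (V : set R) phi psi : (forall x, U x -> V (psi x)) ->
  smooth_on V phi -> smooth_on U psi -> smooth_on U (phi \o psi).
Proof.
move=> UV sphi /smooth_onP spsi; apply/smooth_onP => n.
exact: derivable_upto_comp UV sphi (spsi n).
Qed.

Lemma derive1nD u v n x : smooth_on U u -> smooth_on U v -> U x ->
  derive1n n (u + v) x = derive1n n u x + derive1n n v x.
Proof.
move=> su sv; elim: n x => [//|n IHn] x Ux.
by rewrite derive1nS (derive1_eq_on IHn Ux) derive1E deriveD -?derive1E; [|exact: su|exact: sv].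
Qed.

Definition alternating_upto n c u :=
  forall k x, (k < n)%N -> U x -> 0 < c * (-1) ^+ k * derive1n k u x.

Lemma alternating_uptoS n c u : alternating_upto n.+1 c u <->
  (forall x, U x -> 0 < c * u x) /\ alternating_upto n (- c) (derive1 u).
Proof.
split=> [au | [au0 au']].
  split=> [x Ux | k x kn Ux]; first by have := au 0%N x isT Ux; rewrite mulr1.
  by have := au k.+1 x kn Ux; rewrite derive1Sn exprS mulN1r mulrN !mulNr.
case=> [|k] x kn Ux; first by rewrite mulr1; exact: au0.
by rewrite derive1Sn exprS mulN1r mulrN -mulNr; exact: au'.
Qed.

Lemma alternating_uptoW n c u : alternating_upto n.+1 c u -> alternating_upto n c u.
Proof. by move=> au k x kn; apply: au; apply: ltnW. Qed.

Lemma alternating_upto_eq_on n c u v : (forall x, U x -> u x = v x) ->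
  alternating_upto n c u -> alternating_upto n c v.
Proof. by move=> uv au k x kn Ux; rewrite -(derive1n_eq_on k uv Ux); exact: au. Qed.

Lemma alternating_uptoD n c u v : smooth_on U u -> smooth_on U v ->
  alternating_upto n c u -> alternating_upto n c v -> alternating_upto n c (u + v).
Proof.
move=> su sv au av k x kn Ux.
by rewrite derive1nD // mulrDr addr_gt0 //; [exact: au | exact: av].
Qed.

Lemma alternating_uptoM n a b u v : smooth_on U u -> smooth_on U v ->
  alternating_upto n a u -> alternating_upto n b v -> alternating_upto n (a * b) (u * v).
Proof.
elim: n a b u v => [//|n IHn] a b u v su sv au av.
move: (au) (av) => /alternating_uptoS[au0 au'] /alternating_uptoS[av0 av'].
apply/alternating_uptoS; split=> [x Ux|].
  by have := mulr_gt0 (au0 x Ux) (av0 x Ux); rewrite mulrACA.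
have su' := smooth_on_derive1 su; have sv' := smooth_on_derive1 sv.
have au'v := IHn _ _ _ _ su' sv au' (alternating_uptoW av).
have auv' := IHn _ _ _ _ su sv' (alternating_uptoW au) av'.
rewrite mulrN -mulNr in auv'.
have := alternating_uptoD (smooth_onM su' sv) (smooth_onM su sv') au'v auv'.
rewrite -mulNr; apply: alternating_upto_eq_on => x Ux.
by rewrite derive1M ?fctE; [|exact: (su 0%N)|exact: (sv 0%N)].
Qed.

End local_derivatives.

Lemma alternating_upto_comp {R : realType} (U V : set R) n c phi psi : open U ->
  (forall x, U x -> V (psi x)) -> smooth_on V phi -> smooth_on U psi ->
  (forall k, alternating_upto V k c phi) ->
  alternating_upto U n 1 (derive1 psi) -> alternating_upto U n.+1 c (phi \o psi).
Proof.
move=> oU UV + spsi; elim: n c phi => [|n IHn] c phi sphi aphi apsi'.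
all: apply/alternating_uptoS; split=> [x Ux|//].
all: try by have /alternating_uptoS[+ _] := aphi 1%N; apply; exact: UV.
have aphi' k : alternating_upto V k (- c) (derive1 phi).
  by have /alternating_uptoS[_] := aphi k.+1.
have sphi' := smooth_on_derive1 sphi.
have := alternating_uptoM oU (smooth_on_comp oU UV sphi' spsi) (smooth_on_derive1 spsi)
  (IHn _ _ sphi' aphi' (alternating_uptoW apsi')) apsi'.
rewrite mulr1; apply: (alternating_upto_eq_on oU) => x Ux.
by rewrite derive1_comp ?fctE //; [exact: (spsi 0%N) | exact: (sphi 0%N _ (UV x Ux))].
Qed.

Lemma derive1n_inv {R : realType} n (t : R) : t != 0 ->
  derive1n n GRing.inv t = (-1) ^+ n * n`!%:R / t ^+ n.+1.
Proof.
elim: n t => [|n IHn] t t0; first by rewrite mul1r div1r expr1.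
have tn0 : t ^+ n != 0 by rewrite expf_neq0.
have dX : derivable (fun s : R => s ^+ n.+1) t 1 by exact: exprn_derivable.
rewrite derive1nS (derive1_eq_on (@open_neq R 0) IHn t0).
rewrite derive1Ml; last by apply: derivableV; rewrite ?expf_neq0.
rewrite derive1E deriveV ?expf_neq0 // exp_derive /GRing.scale /= mulr1.
rewrite factS natrM !exprS.
by field; rewrite t0 tn0.
Qed.

Lemma smooth_on_inv {R : realType} : smooth_on `]0, +oo[ (@GRing.inv R).
Proof.
move=> n t; rewrite /= in_itv /= andbT => t0.
apply: (derivable_eq_on (@open_neq R 0) (u := fun s => (-1) ^+ n * n`!%:R / s ^+ n.+1)).
- by move=> s s0; rewrite derive1n_inv.
- by rewrite /= gt_eqF.
apply: derivableM; first exact: derivable_cst.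
by apply: derivableV; [rewrite /= expf_neq0 ?gt_eqF | exact: exprn_derivable].
Qed.

Lemma alternating_upto_inv {R : realType} n :
  alternating_upto `]0, +oo[ n 1 (@GRing.inv R).
Proof.
move=> k t _; rewrite /= in_itv /= andbT => t0.
rewrite derive1n_inv ?gt_eqF // mul1r !mulrA -exprMn mulrNN mulr1 expr1n mul1r.
by rewrite divr_gt0 ?exprn_gt0 // ltr0n fact_gt0.
Qed.

Section inverse_function.
Context {R : realType}.
Implicit Types (U V : set R) (f g h : R -> R).

Lemma open_image_cancel U f g : open U ->
  (forall x, U x -> {for x, continuous f}) -> (forall x, U x -> g (f x) = x) ->
  open (f @` U).
Proof.
move=> oU cf gK; rewrite openE => _ [x Ux <-].
have nU : \forall y \near x, U y by exact: open_nbhs_nbhs.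
have [cg fK] := near_can_continuousAcan_sym (filterS gK nU) (filterS cf nU).
have /(nbhs_singleton cg) : nbhs (g (f x)) U by rewrite gK.
by apply: filterS2 fK => y fgy Ugy; exists (g y).
Qed.

Lemma is_derive_cancel U f g x : open U ->
  (forall x, U x -> derivable f x 1) -> (forall x, U x -> g (f x) = x) ->
  U x -> derive1 f x != 0 -> is_derive (f x) 1 g (derive1 f x)^-1.
Proof.
move=> oU df gK Ux f'x0; have nU : \forall y \near x, U y by exact: open_nbhs_nbhs.
apply: is_derive_inverse; [exact: filterS gK nU | | |exact: f'x0].
  by apply: filterS nU => y /df/derivable1_diffP/differentiable_continuous.
by rewrite derive1E; apply/derivableP/df.
Qed.

Lemma smooth_on_ode U V g h : open U -> (forall x, U x -> V (g x)) ->
  smooth_on V h -> (forall x, U x -> is_derive x 1 g (h (g x))) -> smooth_on U g.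
Proof.
move=> oU UV sh g_ode; apply/smooth_onP; elim=> [//|n IHn].
apply/derivable_uptoS; split=> [x /g_ode[]//|].
have := derivable_upto_comp oU UV sh IHn.
by apply: (derivable_upto_eq_on oU) => x /g_ode[_]; rewrite derive1E => ->.
Qed.

Lemma alternating_upto_ode U V g h n : open U -> (forall x, U x -> V (g x)) ->
  smooth_on V h -> smooth_on U g -> (forall k, alternating_upto V k 1 h) ->
  (forall x, U x -> is_derive x 1 g (h (g x))) -> alternating_upto U n 1 (derive1 g).
Proof.
move=> oU UV sh sg ah g_ode; elim: n => [//|n IHn].
have := alternating_upto_comp oU UV sh sg ah IHn.
by apply: (alternating_upto_eq_on oU) => x /g_ode[_]; rewrite derive1E => ->.
Qed.

End inverse_function.

Lemma bernstein_on_neq0P {R : realType} (U : set R) (u : R -> R) :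
  bernstein_on U u /\ (forall n x, U x -> derive1n n u x != 0) <->
  [/\ smooth_on U u, (forall x, U x -> 0 < u x) &
      forall n, alternating_upto U n 1 (derive1 u)].
Proof.
split=> [[[su u_ge0 u_sign] u_neq0] | [su u_gt0 au']].
  split=> // [x Ux | n k x _ Ux]; first by rewrite lt_def (u_neq0 0%N) ?u_ge0.
  by rewrite mul1r -derive1Sn lt_def mulf_neq0 ?signr_eq0 ?u_neq0 //= (u_sign k.+1).
have u'_gt0 n x : U x -> 0 < (-1) ^+ n * derive1n n.+1 u x.
  by move=> Ux; have := au' n.+1 n x (ltnSn n) Ux; rewrite mul1r derive1Sn.
split; first split=> // [x Ux | [//|n] x _ Ux]; first exact/ltW/u_gt0.
  exact/ltW/u'_gt0.
move=> [|n] x Ux; first by rewrite gt_eqF ?u_gt0.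
by apply: contraTneq (u'_gt0 n x Ux) => ->; rewrite mulr0 ltxx.
Qed.

Theorem lemma4p1 (R : realType) (f g : R -> R) :
  (forall x : R, 0 < x -> 0 < f x) ->
  smooth_on `]0, +oo[%classic f ->
  bernstein (derive1 f) ->
  (forall (n : nat) (x : R), 0 < x -> derive1n n f x != 0) ->
  (* g is the inverse of f (on the image of (0,oo) under f) *)
  (forall x : R, 0 < x -> g (f x) = x) ->
  bernstein_on (f @` `]0, +oo[%classic) g /\
  (forall (n : nat) (y : R), (f @` `]0, +oo[%classic) y -> derive1n n g y != 0).
Proof.
move=> _ sf bf' f_neq0 gK.
set I := `]0, +oo[%classic; set J := f @` I.
have oI : open I by exact: rray_open.
have inI x : I x = (0 < x) by rewrite /I /= in_itv /= andbT.
have [_ f'_gt0 f''_alt] : [/\ smooth_on I (derive1 f), (forall x, I x -> 0 < derive1 f x) &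
    forall n, alternating_upto I n 1 (derive1 (derive1 f))].
  by apply/bernstein_on_neq0P; split=> // n x; rewrite inI -derive1Sn; exact: f_neq0.
have f'I x : I x -> I (derive1 f x) by rewrite [I (derive1 f x)]inI; exact: f'_gt0.
pose h := GRing.inv \o derive1 f.
have sh : smooth_on I h := smooth_on_comp oI f'I smooth_on_inv (smooth_on_derive1 sf).
have ah k : alternating_upto I k 1 h.
  case: k => // k; apply: alternating_upto_comp oI f'I _ (smooth_on_derive1 sf) _ (f''_alt k).
  - exact: smooth_on_inv.
  - exact: alternating_upto_inv.
have df x : I x -> derivable f x 1 := sf 0%N x.
have gK' x : I x -> g (f x) = x by rewrite inI; exact: gK.
have oJ : open J.
  by apply: open_image_cancel oI _ gK' => x /df/derivable1_diffP/differentiable_continuous.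
have gJ y : J y -> I (g y) by case=> x Ix <-; rewrite gK'.
have g_ode y : J y -> is_derive y 1 g (h (g y)).
  case=> x Ix <-; rewrite /h /= gK' //.
  exact: is_derive_cancel oI df gK' Ix (lt0r_neq0 (f'_gt0 x Ix)).
have sg := smooth_on_ode oJ gJ sh g_ode.
apply/bernstein_on_neq0P; split=> // [y /gJ|n]; first by rewrite inI.
exact: alternating_upto_ode oJ gJ sh sg ah g_ode.
Qed.
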